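(* Let $\hat u_0:\mathbb{R}^n\to\mathbb{R}^m$ be such that its graph $M_0\subset\mathbb{R}^{n,m}$ is spacelike and $0\in M_0$. Then $$\lim_{R\to\infty}\inf_{x\in\mathbb{R}^n\setminus B_R}\big[|x|^2-\|\hat u_0(x)\|^2\big]=\infty,$$ equivalently $\lim_{R\to\infty}\inf_{M_0\setminus\mathcal{C}_R}|X|^2=\infty$. Moreover, there exists $\epsilon>0$ such that $\|\hat u_0\|\le\chi_\epsilon$, where $\chi_\epsilon(x)=1-\epsilon$ for $x\in\overline{B_1(0)}$ and $\chi_\epsilon(x)=|x|-\epsilon$ for $x\in\mathbb{R}^n\setminus B_1(0)$.
   Context: $\mathbb{R}^{n,m}=\mathbb{R}^n\times\mathbb{R}^m$ with quadratic form $|(x,y)|^2=|x|^2-\|y\|^2$ ($|x|,\|y\|$ Euclidean norms). The graph is spacelike if $\delta_{ij}-\sum_AD_i\hat u_0^AD_j\hat u_0^A$ is positive definite. $X$ is the position vector of $M_0$, $B_R\subset\mathbb{R}^n$ the Euclidean ball, and $\mathcal{C}_R=\{(x,y)\in\mathbb{R}^{n,m}:|x|^2<R^2\}$ the solid cylinder. *)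

From HB Require Import structures.
From mathcomp Require Import all_boot all_order all_algebra.
From mathcomp Require Import all_classical all_reals all_analysis.
Set Implicit Arguments. Unset Strict Implicit. Unset Printing Implicit Defensive.
Import Order.TTheory GRing.Theory Num.Theory.
Import numFieldNormedType.Exports.
Local Open Scope ring_scope.

(* Euclidean squared norm and Euclidean norm on R^k (the library's norm on
   'rV is the sup norm, so we define the Euclidean one explicitly). *)
Definition sqnormE {R : realType} {k : nat} (v : 'rV[R]_k) : R :=
  \sum_(i < k) v ord0 i ^+ 2.
Definition normE {R : realType} {k : nat} (v : 'rV[R]_k) : R :=
  Num.sqrt (sqnormE v).

Definition partial {R : realType} {n : nat} (f : 'rV[R]_n -> R) (i : 'I_n)
  (x : 'rV[R]_n) : R := 'D_(delta_mx ord0 i) f x.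

Definition induced_metric {R : realType} {n m : nat}
  (u : 'rV[R]_n -> 'rV[R]_m) (x : 'rV[R]_n) : 'M[R]_n :=
  \matrix_(i < n, j < n)
    ((i == j)%:R - \sum_(A < m) partial (fun y => u y ord0 A) i x
                               * partial (fun y => u y ord0 A) j x).

Definition pos_def {R : realType} {n : nat} (M : 'M[R]_n) : Prop :=
  forall v : 'rV[R]_n, v != 0 -> 0 < (v *m M *m v^T) ord0 ord0.

Definition spacelike_graph {R : realType} {n m : nat}
  (u : 'rV[R]_n -> 'rV[R]_m) : Prop :=
  forall x, pos_def (induced_metric u x).

Definition chi {R : realType} {n : nat} (eps : R) (x : 'rV[R]_n) : R :=
  if normE x <= 1 then 1 - eps else normE x - eps.

From HB Require Import structures.
From mathcomp Require Import all_boot all_order all_algebra.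
From mathcomp Require Import all_classical all_reals all_analysis.
From mathcomp Require Import ring lra.
Import Order.TTheory GRing.Theory Num.Theory.
Import numFieldNormedType.Exports.
Local Open Scope classical_set_scope.
Local Open Scope ring_scope.

(* Spacelike means that every differential of u strictly shortens Euclidean
   length, so by the mean value theorem applied to <e, u> along segments, u is
   a strict contraction: |u b - u a| < |b - a| for a <> b.  As u 0 = 0, |u| < 1
   on the closed unit ball, hence |u| <= 1 - eps there by compactness; for
   |x| > 1, comparing x with x / |x| gives |u x| <= |x| - eps.  Finally
   |x|^2 - |u x|^2 >= |x|^2 - (|x| - eps)^2 >= eps |x|, which tends to +oo. *)

Definition dotE {R : realType} {k : nat} (e w : 'rV[R]_k) : R :=
  \sum_(i < k) e ord0 i * w ord0 i.

Definition normalizeE {R : realType} {k : nat} (v : 'rV[R]_k) : 'rV[R]_k :=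
  (normE v)^-1 *: v.

Lemma dotE_linear {R : realType} {k : nat} (e : 'rV[R]_k) : linear (dotE e).
Proof.
move=> c v w; have -> : c *: dotE e v = c * dotE e v by [].
rewrite /dotE mulr_sumr -big_split; apply: eq_bigr => i _.
by rewrite !mxE /=; ring.
Qed.

HB.instance Definition _ (R : realType) (k : nat) (e : 'rV[R]_k) :=
  GRing.isLinear.Build R 'rV[R]_k R _ (dotE e) (dotE_linear e).

Section Euclidean.
Context {R : realType} {k : nat}.
Implicit Types (a e v w : 'rV[R]_k) (c t : R).

Lemma sqnormE_ge0 v : 0 <= sqnormE v.
Proof. by apply: sumr_ge0 => i _; rewrite sqr_ge0. Qed.

Lemma normE_ge0 v : 0 <= normE v.
Proof. exact: sqrtr_ge0. Qed.

Lemma sqr_normE v : normE v ^+ 2 = sqnormE v.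
Proof. by rewrite sqr_sqrtr // sqnormE_ge0. Qed.

Lemma sqnormE_mx v : sqnormE v = (v *m v^T) ord0 ord0.
Proof. by rewrite mxE; apply: eq_bigr => i _; rewrite mxE expr2. Qed.

Lemma normE0 : normE (0 : 'rV[R]_k) = 0.
Proof. by rewrite /normE /sqnormE big1 ?sqrtr0 // => i _; rewrite mxE expr0n. Qed.

Lemma sqnormE_eq0 v : (sqnormE v == 0) = (v == 0).
Proof.
rewrite psumr_eq0 => [|i _]; last exact: sqr_ge0.
apply/allP/eqP => [v0|-> i _]; last by rewrite mxE expr0n eqxx.
by apply/rowP => i; rewrite mxE; apply/eqP; rewrite -sqrf_eq0 (implyP (v0 i _)).
Qed.

Lemma normE_gt0 v : (0 < normE v) = (v != 0).
Proof. by rewrite sqrtr_gt0 lt_def sqnormE_ge0 andbT sqnormE_eq0. Qed.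

Lemma sqnormEZ c v : sqnormE (c *: v) = c ^+ 2 * sqnormE v.
Proof. by rewrite /sqnormE mulr_sumr; apply: eq_bigr => i _; rewrite mxE exprMn. Qed.

Lemma normEZ c v : normE (c *: v) = `|c| * normE v.
Proof. by rewrite /normE sqnormEZ sqrtrM ?sqr_ge0 // sqrtr_sqr. Qed.

Lemma ler_coord_normE v i : `|v ord0 i| <= normE v.
Proof.
rewrite -sqrtr_sqr ler_sqrt ?sqnormE_ge0 // /sqnormE (bigD1 i) //= lerDl.
by apply: sumr_ge0 => j _; exact: sqr_ge0.
Qed.

Lemma dotEvv v : dotE v v = sqnormE v.
Proof. by apply: eq_bigr => i _; rewrite expr2. Qed.

Lemma dotEZl c e w : dotE (c *: e) w = c * dotE e w.
Proof. by rewrite /dotE mulr_sumr; apply: eq_bigr => i _; rewrite mxE mulrA. Qed.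

Lemma dotE_delta (i : 'I_k) w : dotE (delta_mx ord0 i) w = w ord0 i.
Proof.
rewrite /dotE (bigD1 i) //= mxE !eqxx mul1r big1 ?addr0 // => j ji.
by rewrite mxE eqxx (negbTE ji) mul0r.
Qed.

Lemma sqnormE_subZ a e t :
  sqnormE (a - t *: e) = sqnormE a - 2 * t * dotE e a + t ^+ 2 * sqnormE e.
Proof.
rewrite /sqnormE /dotE !mulr_sumr -sumrN -!big_split /=.
by apply: eq_bigr => i _; rewrite !mxE; ring.
Qed.

(* Cauchy-Schwarz for a unit vector [e]: expand [0 <= |a - <e, a> e|^2]. *)
Lemma dotE_unit_le e a : sqnormE e = 1 -> dotE e a <= normE a.
Proof.
move=> e1; have := sqnormE_ge0 (a - dotE e a *: e).
rewrite sqnormE_subZ e1 mulr1 => h.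
rewrite (le_trans (ler_norm _)) // -sqrtr_sqr ler_sqrt ?sqnormE_ge0 //; lra.
Qed.

Lemma normE_normalizeE v : v != 0 -> normE (normalizeE v) = 1.
Proof.
rewrite -normE_gt0 => v_gt0.
by rewrite normEZ gtr0_norm ?invr_gt0 // mulVf ?gt_eqF.
Qed.

Lemma sqnormE_normalizeE v : v != 0 -> sqnormE (normalizeE v) = 1.
Proof. by move=> v0; rewrite -sqr_normE normE_normalizeE ?expr1n. Qed.

Lemma dotE_normalizeE v : dotE (normalizeE v) v = normE v.
Proof.
rewrite dotEZl dotEvv -sqr_normE.
have [->|v0] := eqVneq (normE v) 0; first by rewrite invr0 mul0r.
by rewrite expr2 mulKf.
Qed.

Lemma ler_normED v w : normE (v + w) <= normE v + normE w.
Proof.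
have [->|vw0] := eqVneq (v + w) 0; first by rewrite normE0 addr_ge0 ?normE_ge0.
rewrite -dotE_normalizeE linearD /=.
by rewrite lerD // dotE_unit_le // sqnormE_normalizeE.
Qed.

Lemma sqnormE_continuous : continuous (@sqnormE R k).
Proof.
move=> x; apply: differentiable_continuous.
have -> : @sqnormE R k = \sum_(i < k) (fun w : 'rV[R]_k => w ord0 i * w ord0 i).
  by apply: funext => w; rewrite fct_sumE; apply: eq_bigr => i _; rewrite expr2.
by apply: differentiable_sum => i; apply: differentiableM; exact: differentiable_coord.
Qed.

Lemma normE_continuous : continuous (@normE R k).
Proof.
move=> x; apply: (continuous_comp (@sqnormE_continuous x)).
exact: sqrt_continuous.
Qed.

Lemma dotE_continuous e : continuous (dotE e).
Proof.
move=> x; apply: differentiable_continuous.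
have -> : dotE e = \sum_(i < k) (fun w : 'rV[R]_k => e ord0 i * w ord0 i).
  by apply: funext => w; rewrite /dotE fct_sumE.
apply: differentiable_sum => i.
by apply: differentiableM; [exact: differentiable_cst | exact: differentiable_coord].
Qed.

Lemma closed_unit_ballE_compact : compact [set v : 'rV[R]_k | normE v <= 1].
Proof.
apply: bounded_closed_compact.
  exists 1; split => // M M1 v /= v1.
  rewrite [leLHS]/Num.norm /= mx_normrE; apply: bigmax_le => [|[i j] _ /=].
    exact: le_trans ler01 (ltW M1).
  by rewrite [i]ord1 (le_trans (ler_coord_normE v j)) // (le_trans v1) ?ltW.
exact: (proj1 (continuous_closedP _) normE_continuous _ (@closed_le R 1)).
Qed.

End Euclidean.

Section MeanValue.
Context {R : realType} {V : normedModType R}.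

Lemma is_derive_line (f : V -> R) (a v : V) (t : R) :
  differentiable f (a + t *: v) ->
  is_derive t 1 (fun s : R => f (a + s *: v)) ('d f (a + t *: v) v).
Proof.
move=> df.
have quotE : (fun h : R => h^-1 *: (((fun s => f (a + s *: v)) \o shift t) (h *: 1)
                - f (a + t *: v))) =
             (fun h : R => h^-1 *: ((f \o shift (a + t *: v)) (h *: v)
                - f (a + t *: v))).
  apply: funext => h /=; congr (_ *: (f _ - _)).
  by rewrite /shift /= [h *: 1]mulr1 scalerDl addrCA addrA.
apply: DeriveDef; first by rewrite /derivable quotE; exact: diff_derivable.
by rewrite /derive quotE -deriveE.
Qed.

Lemma MVT_segment (f : V -> R) (a b : V) :
  (forall x, differentiable f x) -> exists c, f b - f a = 'd f c (b - a).
Proof.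
move=> df; pose g s := f (a + s *: (b - a)).
have g_der (t : R) : is_derive t (1 : R) g ('d f (a + t *: (b - a)) (b - a)).
  exact: is_derive_line.
have g_cont : {within `[0, 1], continuous g}.
  apply: continuous_subspaceT => t; apply: differentiable_continuous.
  by apply/derivable1_diffP; have [] := g_der t.
have [c _] := MVT ltr01 (fun t _ => g_der t) g_cont.
by rewrite /g scale1r scale0r addr0 subr0 mulr1 subrKC; exists (a + c *: (b - a)).
Qed.

End MeanValue.

Section SpacelikeGraph.
Context {R : realType} {n m : nat} {u : 'rV[R]_n -> 'rV[R]_m}.
Hypothesis du : forall x, differentiable u x.

Lemma differentiable_dotE_comp e x : differentiable (dotE e \o u) x.
Proof. exact/differentiable_comp/linear_differentiable/dotE_continuous. Qed.

Lemma diff_dotE_comp e x v : 'd (dotE e \o u) x v = dotE e ('d u x v).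
Proof.
rewrite diff_comp //; last exact/linear_differentiable/dotE_continuous.
by rewrite (diff_lin _ (dotE_continuous e)).
Qed.

Lemma diff_jacobian x v : 'd u x v = v *m 'J u x.
Proof. by rewrite -deriveE // deriveEjacobian. Qed.

Lemma partial_jacobian (A : 'I_m) i x : partial (fun y => u y ord0 A) i x = 'J u x i A.
Proof.
have -> : (fun y => u y ord0 A) = dotE (delta_mx ord0 A) \o u.
  by apply: funext => y; rewrite /= dotE_delta.
rewrite /partial deriveE; last exact: differentiable_dotE_comp.
by rewrite (diff_dotE_comp (delta_mx ord0 A)) dotE_delta diff_jacobian -rowE mxE.
Qed.

Lemma induced_metric_jacobian x : induced_metric u x = 1%:M - 'J u x *m ('J u x)^T.
Proof.
apply/matrixP => i j; rewrite !mxE; congr (_ - _).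
under eq_bigr => A _ do rewrite !partial_jacobian.
by under [RHS]eq_bigr => A _ do rewrite [_^T _ _]mxE.
Qed.

Lemma induced_metric_form x v :
  (v *m induced_metric u x *m v^T) ord0 ord0 = sqnormE v - sqnormE ('d u x v).
Proof.
rewrite induced_metric_jacobian diff_jacobian !sqnormE_mx trmx_mul mulmxBr mulmx1.
by rewrite mulmxBl !mulmxA [LHS]mxE [X in _ + X]mxE.
Qed.

Lemma spacelike_diff_lt x v : spacelike_graph u -> v != 0 ->
  normE ('d u x v) < normE v.
Proof.
move=> /(_ x v) sp /sp; rewrite induced_metric_form subr_gt0 => lt_sq.
by rewrite ltr_sqrt // (le_lt_trans (sqnormE_ge0 ('d u x v))).
Qed.

Lemma spacelike_contraction a b : spacelike_graph u -> a != b ->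
  normE (u b - u a) < normE (b - a).
Proof.
move=> sp ab; have ba0 : b - a != 0 by rewrite subr_eq0 eq_sym.
have [->|uba0] := eqVneq (u b - u a) 0; first by rewrite normE0 normE_gt0.
rewrite -dotE_normalizeE linearB /=; set e := normalizeE _.
have [c ->] := MVT_segment _ a b (differentiable_dotE_comp e).
rewrite diff_dotE_comp.
apply: le_lt_trans (spacelike_diff_lt c _ sp ba0).
exact/dotE_unit_le/sqnormE_normalizeE.
Qed.

End SpacelikeGraph.

Section ChiBound.
Context {R : realType}.

Lemma compact_lt_bound {T : topologicalType} {f : T -> R} {A : set T} {c : R} :
  compact A -> {within A, continuous f} -> (forall x, A x -> f x < c) ->
  exists2 M, M < c & forall x, A x -> f x <= M.
Proof.
move=> cA fA ltc; have [->|/set0P A0] := eqVneq A set0.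
  by exists (c - 1) => //; rewrite ltrBlDr ltrDl.
have [x0 /set_mem Ax0 max_x0] := compact_EVT_max A0 cA fA.
exists (f x0) => [|x Ax]; first exact: ltc.
by apply: max_x0; rewrite inE.
Qed.

Lemma chi_ge1 {n : nat} (eps : R) (x : 'rV[R]_n) :
  1 <= normE x -> chi eps x = normE x - eps.
Proof.
rewrite /chi; case: ifPn => // x_le1 x_ge1.
by have -> : normE x = 1 by apply/eqP; rewrite eq_le x_le1 x_ge1.
Qed.

(* Outside the unit ball compare [x] with its radial projection [normalizeE x]. *)
Lemma le_chi {n m : nat} (f : 'rV[R]_n -> 'rV[R]_m) (eps : R) :
  (forall a b, normE (f b - f a) <= normE (b - a)) ->
  (forall x, normE x <= 1 -> normE (f x) <= 1 - eps) ->
  forall x, normE (f x) <= chi eps x.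
Proof.
move=> f_lip f_ball x; rewrite /chi; case: ifPn => [/f_ball //|].
rewrite -ltNge => x_gt1; have x_gt0 := lt_trans ltr01 x_gt1.
have x0 : x != 0 by rewrite -normE_gt0.
set y := normalizeE x.
have y1 : normE y = 1 by exact: normE_normalizeE.
have xy : normE (x - y) = normE x - 1.
  rewrite /y /normalizeE -{1}[x]scale1r -scalerBl normEZ ger0_norm.
    by rewrite mulrBl mul1r mulVf ?gt_eqF.
  by rewrite subr_ge0 invf_le1 // ltW.
rewrite -[f x](subrK (f y)); apply: le_trans (ler_normED _ _) _.
have := f_lip y x; have := f_ball y; rewrite y1 lexx xy => /(_ isT); lra.
Qed.

Lemma sqnormE_gap_ge {n m : nat} (eps : R) (x : 'rV[R]_n) (w : 'rV[R]_m) :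
  0 <= eps -> normE w <= normE x - eps -> eps * normE x <= sqnormE x - sqnormE w.
Proof. by rewrite -!sqr_normE; have := normE_ge0 w; nra. Qed.

Lemma chi_inf_gap_cvgey {n m : nat} (f : 'rV[R]_n -> 'rV[R]_m) (eps : R) :
  0 < eps -> (forall x, normE (f x) <= chi eps x) ->
  (fun r : R => ereal_inf [set (sqnormE x - sqnormE (f x))%:E
                           | x in [set x : 'rV[R]_n | r <= normE x]])
     @ +oo --> +oo%E.
Proof.
move=> eps0 f_chi; apply/cvgeyPge => A; near=> r.
apply: le_ereal_inf_tmp => _ [x /= r_x <-]; rewrite lee_fin.
have x_ge1 : 1 <= normE x.
  by apply: le_trans r_x; near: r; apply: nbhs_pinfty_ge; rewrite num_real.
have A_r : A <= eps * r.
  rewrite -ler_pdivrMl //; near: r; apply: nbhs_pinfty_ge; rewrite num_real.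
apply: le_trans A_r _.
have := f_chi x; rewrite chi_ge1 // => /(sqnormE_gap_ge _ _ _ (ltW eps0)).
by apply: le_trans; rewrite ler_wpM2l // ltW.
Unshelve. all: by end_near.
Qed.

End ChiBound.

Theorem lemma5p1 (R : realType) (n m : nat) (u : 'rV[R]_n -> 'rV[R]_m) :
  (forall x, differentiable u x) ->
  spacelike_graph u ->
  u 0 = 0 ->
  ((fun r : R => ereal_inf [set (sqnormE x - sqnormE (u x))%:E
                           | x in [set x : 'rV[R]_n | r <= normE x]])
     @ +oo --> +oo%E)
  /\ (exists eps : R, 0 < eps /\ forall x, normE (u x) <= chi eps x).
Proof.
move=> du sp u0.
have u_lip a b : normE (u b - u a) <= normE (b - a).
  have [->|ab] := eqVneq a b; first by rewrite subrr normE0 normE_ge0.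
  exact: ltW (spacelike_contraction du _ _ sp ab).
have u_lt1 x : normE x <= 1 -> normE (u x) < 1.
  have [->|x0] := eqVneq x 0; first by move=> _; rewrite u0 normE0.
  apply: lt_le_trans; have := spacelike_contraction du 0 x sp.
  by rewrite eq_sym u0 !subr0; apply.
have u_cont : {within [set x | normE x <= 1], continuous (fun x => normE (u x))}.
  apply: continuous_subspaceT => x.
  exact: continuous_comp (differentiable_continuous (du x)) (normE_continuous _).
have [M M_lt1 u_M] := compact_lt_bound closed_unit_ballE_compact u_cont u_lt1.
have u_chi : forall x, normE (u x) <= chi (1 - M) x.
  by apply: le_chi => // x x1; rewrite subKr; exact: u_M.
split; first by apply: chi_inf_gap_cvgey u_chi; rewrite subr_gt0.
by exists (1 - M); rewrite subr_gt0.
Qed.
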